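(* Let $\mathcal{C}$ be a covering of a finite set $E$ and let $SH(X)=\bigcup\{K\in\mathcal{C}:K\cap X\neq\emptyset\}$ for $X\subseteq E$. Then $\mathcal{C}$ satisfies the condition (TRA): for all $x,y,z\in E$, if there are $K_1,K_2\in\mathcal{C}$ with $x,z\in K_1$ and $y,z\in K_2$, then there exists $K_3\in\mathcal{C}$ with $x,y\in K_3$; if and only if $SH$ is the closure operator of some matroid on $E$.
   Context: A covering of $E$ is a family of nonempty subsets of $E$ with union $E$. The closure operator of a matroid with rank function $r$ is $cl(X)=\{a\in E:r(X\cup\{a\})=r(X)\}$. *)

From mathcomp Require Import all_boot.
Set Implicit Arguments. Unset Strict Implicit. Unset Printing Implicit Defensive.

(* The finite ground set E is modelled as a finType T (E = [set: T]). *)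

Definition matroid_rank (T : finType) (r : {set T} -> nat) : Prop :=
  [/\ forall X : {set T}, r X <= #|X|,
      forall X Y : {set T}, X \subset Y -> r X <= r Y
    & forall X Y : {set T}, r (X :|: Y) + r (X :&: Y) <= r X + r Y].

Definition mcl (T : finType) (r : {set T} -> nat) (X : {set T}) : {set T} :=
  [set a | r (a |: X) == r X].

Definition covering (T : finType) (C : {set {set T}}) : Prop :=
  (forall K, K \in C -> K != set0) /\ \bigcup_(K in C) K = [set: T].

Definition SH (T : finType) (C : {set {set T}}) (X : {set T}) : {set T} :=
  \bigcup_(K in C | K :&: X != set0) K.

Definition TRA (T : finType) (C : {set {set T}}) : Prop :=
  forall x y z : T,
    (exists K1, [/\ K1 \in C, x \in K1 & z \in K1]) ->
    (exists K2, [/\ K2 \in C, y \in K2 & z \in K2]) ->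
    exists K3, [/\ K3 \in C, x \in K3 & y \in K3].

From mathcomp Require Import all_boot.
From mathcomp Require Import zify.

Set Implicit Arguments.
Unset Strict Implicit.
Unset Printing Implicit Defensive.

(* Under (TRA) and the covering hypothesis, "lying in a common block" is an
   equivalence relation, and SH(X) is the union of the classes meeting X.
   This is the closure operator of the partition matroid whose rank function
   counts the classes met by X.  Conversely, in any matroid y in cl{z} and
   z in cl{x} force y in cl{x} by submodularity, and since y in SH{x} means
   that x and y share a block, this transitivity is exactly (TRA). *)

Lemma eq_class_set (T : finType) (e : rel T) (a x : T) :
  reflexive e -> symmetric e -> transitive e ->
  ([set y | e a y] == [set y | e x y]) = e a x.
Proof.
move=> eR eS eT; apply/eqP/idP => [E|eax].
  have : x \in [set y | e a y] by rewrite E inE eR.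
  by rewrite inE.
apply/setP=> y; rewrite !inE; apply/idP/idP; last exact: eT.
by apply: eT; rewrite eS.
Qed.

Section Comember.

Variables (T : finType) (C : {set {set T}}).

Definition comember (x y : T) : bool := [exists K in C, (x \in K) && (y \in K)].

Lemma comemberP x y :
  reflect (exists K, [/\ K \in C, x \in K & y \in K]) (comember x y).
Proof.
apply: (iffP existsP) => [[K /andP[KC /andP[xK yK]]]|[K [KC xK yK]]].
  by exists K.
by exists K; rewrite KC xK yK.
Qed.

Lemma comember_sym : symmetric comember.
Proof.
by move=> x y; apply/comemberP/comemberP => -[K [KC ? ?]]; exists K.
Qed.

Lemma mem_SH a X : (a \in SH C X) = [exists x in X, comember a x].
Proof.
apply/bigcupP/existsP => [[K /andP[KC /set0Pn[x]]]|[x /andP[xX /comemberP]]].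
  rewrite inE => /andP[xK xX] aK.
  by exists x; rewrite xX; apply/comemberP; exists K.
case=> K [KC aK xK]; exists K => //.
by rewrite KC; apply/set0Pn; exists x; rewrite inE xK.
Qed.

Lemma mem_SH1 a x : (a \in SH C [set x]) = comember a x.
Proof.
rewrite mem_SH; apply/existsP/idP => [[y /andP[/set1P-> //]]|axC].
by exists x; rewrite set11.
Qed.

Lemma covering_comember_refl : covering C -> reflexive comember.
Proof.
move=> [_ CE] x; have : x \in \bigcup_(K in C) K by rewrite CE inE.
by case/bigcupP=> K KC xK; apply/comemberP; exists K.
Qed.

Lemma TRA_comember_trans : TRA C -> transitive comember.
Proof.
move=> CTRA y x z xy yz; apply/comemberP.
by apply: (CTRA x z y); apply/comemberP; rewrite // comember_sym.
Qed.

Definition comember_class (x : T) : {set T} := [set y | comember x y].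

Lemma SH_comember_class X :
  covering C -> TRA C ->
  SH C X = [set a | comember_class a \in comember_class @: X].
Proof.
move=> /covering_comember_refl eR /TRA_comember_trans eT.
apply/setP=> a; rewrite mem_SH inE.
apply/existsP/imsetP => [[x /andP[xX ax]]|[x xX /eqP]].
  by exists x => //; apply/eqP; rewrite eq_class_set //; apply: comember_sym.
by rewrite eq_class_set //; [exists x; rewrite xX | apply: comember_sym].
Qed.

End Comember.

Section ImageRank.

Variables (T U : finType) (f : T -> U).

Lemma matroid_rank_imset : matroid_rank (fun X : {set T} => #|f @: X|).
Proof.
split=> [X|X Y XY|X Y]; first exact: leq_imset_card.
  exact/subset_leq_card/imsetS.
rewrite imsetU -(cardsUI (f @: X) (f @: Y)) leq_add2l.
by apply/subset_leq_card; rewrite subsetI !imsetS ?subsetIl ?subsetIr.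
Qed.

Lemma mcl_imset X : mcl (fun X : {set T} => #|f @: X|) X = [set a | f a \in f @: X].
Proof.
apply/setP=> a; rewrite !inE imsetU1 cardsU1.
by case: (f a \in f @: X); rewrite /= ?add0n ?add1n ?eqxx // eqn_leq ltnn.
Qed.

End ImageRank.

Lemma mcl_set1_trans (T : finType) (r : {set T} -> nat) (x y z : T) :
  matroid_rank r -> z \in mcl r [set x] -> y \in mcl r [set z] ->
  y \in mcl r [set x].
Proof.
move=> [_ r_mono r_sub]; rewrite !inE => /eqP rzx /eqP ryz; apply/eqP.
set X := z |: [set x]; set Y := y |: [set z].
have rXY := r_sub X Y.
have rz_le : r [set z] <= r (X :&: Y).
  by apply: r_mono; rewrite sub1set !inE !eqxx orbT.
have ryx_le : r (y |: [set x]) <= r (X :|: Y).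
  by apply: r_mono; apply/subsetP=> w; rewrite !inE => /orP[]->; rewrite ?orbT.
have rx_le : r [set x] <= r (y |: [set x]) by apply/r_mono/subsetUr.
rewrite /X /Y in rXY rz_le ryx_le; lia.
Qed.

Theorem theorem9 (T : finType) (C : {set {set T}}) :
  covering C ->
  (TRA C <-> exists r : {set T} -> nat, matroid_rank r /\ forall X : {set T}, SH C X = mcl r X).
Proof.
move=> Ccov; split=> [CTRA|[r [rM SHE]] x y z /comemberP xz /comemberP yz].
  exists (fun X : {set T} => #|comember_class C @: X|).
  split=> [|X]; first exact: matroid_rank_imset.
  by rewrite mcl_imset SH_comember_class.
have z_clx : z \in mcl r [set x] by rewrite -SHE mem_SH1 comember_sym.
have y_clz : y \in mcl r [set z] by rewrite -SHE mem_SH1.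
have := mcl_set1_trans rM z_clx y_clz.
by rewrite -SHE mem_SH1 comember_sym => /comemberP.
Qed.
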